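(* Let $n\ge 2$, let $\mathcal{S}\subseteq(\mathbb{C}^d)^{\otimes n}$ be the permutation-symmetric subspace, and let $B$ be a $d\times d$ complex matrix with distinct eigenvalues $\lambda_1,\ldots,\lambda_p$ and corresponding generalized eigenspaces $V_1,\ldots,V_p\subseteq\mathbb{C}^d$ (so $\mathbb{C}^d=V_1\oplus\cdots\oplus V_p$). If $|\psi\rangle\in\mathcal{S}$ satisfies $B_{(1)}|\psi\rangle\in\mathcal{S}$, then $$|\psi\rangle\in\bigoplus_{i=1}^p\mathrm{Sym}^n(V_i),$$ where $\mathrm{Sym}^n(V_i)$ denotes the permutation-symmetric subspace of $V_i^{\otimes n}\subseteq(\mathbb{C}^d)^{\otimes n}$.
   Context: $\mathcal{S}$ is the set of vectors in $(\mathbb{C}^d)^{\otimes n}$ invariant under all permutations of the $n$ tensor factors. For a $d\times d$ matrix $Y$, $Y_{(1)}$ denotes $Y\otimes\mathbb{I}\otimes\cdots\otimes\mathbb{I}$ on $(\mathbb{C}^d)^{\otimes n}$. *)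

From HB Require Import structures.
From mathcomp Require Import all_boot all_order all_algebra all_fingroup.
From mathcomp Require Import complex reals.
Set Implicit Arguments. Unset Strict Implicit. Unset Printing Implicit Defensive.
Import GRing.Theory Num.Theory.
Local Open Scope ring_scope.

(* Computational basis of (C^d)^{\otimes n}: functions f : 'I_n -> 'I_d,
   f k = index of the basis vector in tensor factor k. *)
Notation idx n d := {ffun 'I_n -> 'I_d}.

(* A vector of (F^d)^{\otimes n}: its coefficients in the product basis. *)
Notation tensor F n d := {ffun idx n d -> F}.

Definition permute_idx n d (s : 'S_n) (f : idx n d) : idx n d :=
  [ffun k => f (s k)].

Definition symmetric_tensor (F : nzRingType) n d (psi : tensor F n d) : Prop :=
  forall (s : 'S_n) (f : idx n d), psi (permute_idx s f) = psi f.

Definition set_idx n d (f : idx n d) (i : 'I_n) (j : 'I_d) : idx n d :=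
  [ffun k => if k == i then j else f k].

(* Y acting on tensor factor i (identity on the others):
   Y_(i) = I (x) ... (x) Y (x) ... (x) I. *)
Definition apply_at (F : nzRingType) n d (i : 'I_n) (Y : 'M[F]_d)
  (psi : tensor F n d) : tensor F n d :=
  [ffun f : idx n d => \sum_(j < d) Y (f i) j * psi (set_idx f i j)].

Definition prod_tensor (F : nzRingType) n d (v : 'I_n -> 'cV[F]_d) : tensor F n d :=
  [ffun f : idx n d => \prod_(k < n) v k (f k) 0].

Definition in_tensor_power (F : nzRingType) n d (P : 'cV[F]_d -> Prop)
  (psi : tensor F n d) : Prop :=
  exists (M : nat) (v : 'I_M -> 'I_n -> 'cV[F]_d),
    (forall m k, P (v m k)) /\ psi = \sum_(m < M) prod_tensor (v m).

Definition in_sym_power (F : nzRingType) n d (P : 'cV[F]_d -> Prop)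
  (psi : tensor F n d) : Prop :=
  in_tensor_power P psi /\ symmetric_tensor psi.

Definition gen_eigenspace (F : fieldType) d (B : 'M[F]_d) (a : F)
  (v : 'cV[F]_d) : Prop :=
  exists k : nat, (B - a%:M) ^+ k *m v = 0.

From HB Require Import structures.
From mathcomp Require Import all_boot all_order all_algebra all_fingroup.
From mathcomp Require Import complex reals ring.
Set Implicit Arguments. Unset Strict Implicit. Unset Printing Implicit Defensive.
Import GRing.Theory.
Local Open Scope ring_scope.

(* Since psi and B_(1) psi are both symmetric, B acts on psi in the same way
   through every tensor factor: B_(j) psi = B_(1) psi for all j, hence
   q(B)_(j) psi = q(B)_(1) psi for every polynomial q.  The spectral
   projections P_k onto the generalized eigenspaces V_k are polynomials in B
   (Bezout for the pairwise coprime (X - lambda_k)^d), so each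
   phi_k := (P_k)_(1) psi is symmetric and fixed by (P_k)_(j) for every j,
   hence lies in V_k^(x)n; and the phi_k sum to psi because the P_k sum to 1. *)

Section ApplyAt.
Variables (F : comNzRingType) (n d : nat).
Implicit Types (psi chi : tensor F n d) (X Y : 'M[F]_d) (f : idx n d) (i j : 'I_n).

Lemma set_idx_eq f i a : set_idx f i a i = a.
Proof. by rewrite ffunE eqxx. Qed.

Lemma set_idx_neq f i j a : i != j -> set_idx f i a j = f j.
Proof. by move=> ij; rewrite ffunE eq_sym (negbTE ij). Qed.

Lemma set_idx_id f i : set_idx f i (f i) = f.
Proof. by apply/ffunP => k; rewrite ffunE; case: eqP => // ->. Qed.

Lemma set_idxK f i a b : set_idx (set_idx f i a) i b = set_idx f i b.
Proof. by apply/ffunP => k; rewrite !ffunE; case: eqP. Qed.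

Lemma set_idxC f i j a b : i != j ->
  set_idx (set_idx f i a) j b = set_idx (set_idx f j b) i a.
Proof.
move=> ij; apply/ffunP => k; rewrite !ffunE.
by case: (eqVneq k j) => [->|//]; rewrite eq_sym (negbTE ij).
Qed.

Lemma apply_at_is_nmod_morphism i X : nmod_morphism (apply_at i X).
Proof.
split=> [|psi chi]; apply/ffunP => f; rewrite !ffunE.
  by rewrite big1 // => j _; rewrite ffunE mulr0.
by rewrite -big_split; apply: eq_bigr => j _; rewrite ffunE mulrDr.
Qed.

HB.instance Definition _ i X := GRing.isNmodMorphism.Build
  (tensor F n d) (tensor F n d) (apply_at i X) (apply_at_is_nmod_morphism i X).

Lemma apply_atDmx i X Y psi :
  apply_at i (X + Y) psi = apply_at i X psi + apply_at i Y psi.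
Proof.
apply/ffunP => f; rewrite !ffunE -big_split; apply: eq_bigr => j _.
by rewrite mxE mulrDl.
Qed.

Lemma apply_at_sum_mx i (I : finType) (P : I -> 'M[F]_d) psi :
  apply_at i (\sum_k P k) psi = \sum_k apply_at i (P k) psi.
Proof.
apply/ffunP => f; rewrite ffunE sum_ffunE.
under [RHS]eq_bigr do rewrite ffunE.
rewrite exchange_big; apply: eq_bigr => j _.
by rewrite summxE mulr_suml.
Qed.

Lemma apply_at_scalar_mx i c psi : apply_at i c%:M psi = [ffun f => c * psi f].
Proof.
apply/ffunP => f; rewrite !ffunE (bigD1 (f i)) //= big1 ?addr0.
  by rewrite mxE eqxx mulr1n set_idx_id.
by move=> j fij; rewrite mxE eq_sym (negbTE fij) mulr0n mul0r.
Qed.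

Lemma apply_at0mx i psi : apply_at i 0 psi = 0.
Proof.
rewrite -(raddf0 (@scalar_mx F d)) apply_at_scalar_mx.
by apply/ffunP => f; rewrite !ffunE mul0r.
Qed.

Lemma apply_at1mx i psi : apply_at i 1%:M psi = psi.
Proof. by rewrite apply_at_scalar_mx; apply/ffunP => f; rewrite ffunE mul1r. Qed.

Lemma apply_at_mulmx i X Y psi :
  apply_at i X (apply_at i Y psi) = apply_at i (X *m Y) psi.
Proof.
apply/ffunP => f; rewrite !ffunE.
under eq_bigr do rewrite ffunE mulr_sumr.
rewrite exchange_big; apply: eq_bigr => l _; rewrite mxE mulr_suml.
by apply: eq_bigr => j _; rewrite set_idx_eq set_idxK mulrA.
Qed.

Lemma apply_atC i j X Y psi : i != j ->
  apply_at i X (apply_at j Y psi) = apply_at j Y (apply_at i X psi).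
Proof.
move=> ij; apply/ffunP => f; rewrite !ffunE.
under eq_bigr do rewrite ffunE mulr_sumr set_idx_neq //.
rewrite exchange_big; apply: eq_bigr => b _.
rewrite ffunE mulr_sumr; apply: eq_bigr => a _.
by rewrite set_idx_neq 1?eq_sym // !mulrA [X _ _ * _]mulrC set_idxC.
Qed.

Lemma apply_at_prod_tensor i Y (v : 'I_n -> 'cV[F]_d) :
  apply_at i Y (prod_tensor v) =
  prod_tensor (fun j => if j == i then Y *m v j else v j).
Proof.
apply/ffunP => f; rewrite !ffunE (bigD1 i) //= eqxx mxE mulr_suml.
apply: eq_bigr => l _; rewrite ffunE (bigD1 i) //= set_idx_eq mulrA.
by congr (_ * _); apply: eq_bigr => k ki; rewrite (negbTE ki) set_idx_neq // eq_sym.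
Qed.

Lemma apply_at_permute i X psi (s : 'S_n) f : symmetric_tensor psi ->
  apply_at i X psi (permute_idx s f) = apply_at (s i) X psi f.
Proof.
move=> sym_psi; rewrite !ffunE; apply: eq_bigr => j _.
suff -> : set_idx (permute_idx s f) i j = permute_idx s (set_idx f (s i) j).
  by rewrite sym_psi.
by apply/ffunP => k; rewrite !ffunE (inj_eq perm_inj).
Qed.

Definition slot_invariant Y psi := forall i j, apply_at i Y psi = apply_at j Y psi.

Lemma slot_invariant_apply_at Y psi i :
  slot_invariant Y psi -> slot_invariant Y (apply_at i Y psi).
Proof.
move=> inv_psi.
suff E k : apply_at k Y (apply_at i Y psi) = apply_at i Y (apply_at i Y psi).
  by move=> k l; rewrite !E.
by case: (eqVneq k i) => [-> //|ki]; rewrite apply_atC // (inv_psi k i).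
Qed.

Lemma slot_invariant_of_symmetric i Y psi : symmetric_tensor psi ->
  symmetric_tensor (apply_at i Y psi) -> slot_invariant Y psi.
Proof.
move=> sym_psi sym_Ypsi; suff E j : apply_at j Y psi = apply_at i Y psi.
  by move=> j k; rewrite !E.
apply/ffunP => f.
by rewrite -[in LHS](tpermL i j) -(apply_at_permute _ _ _ _ sym_psi) sym_Ypsi.
Qed.

Lemma symmetric_apply_at i Y psi : symmetric_tensor psi ->
  slot_invariant Y psi -> symmetric_tensor (apply_at i Y psi).
Proof. by move=> sym_psi inv_psi s f; rewrite apply_at_permute // (inv_psi (s i) i). Qed.

(* Each coordinate of [chi] is absorbed into the factor of slot [j0]. *)
Lemma sum_prod_tensor_expansion chi (j0 : 'I_n) :
  exists M (v : 'I_M -> 'I_n -> 'cV[F]_d), chi = \sum_(m < M) prod_tensor (v m).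
Proof.
pose v g k : 'cV[F]_d := (if k == j0 then chi g else 1) *: delta_mx (g k) 0.
have v_coord g f : prod_tensor (v g) f = if f == g then chi g else 0.
  rewrite ffunE.
  under eq_bigr do rewrite /v !mxE eqxx andbT.
  rewrite big_split /= -big_mkcond big_pred1_eq.
  case: (eqVneq f g) => [->|]; first by rewrite big1 ?mulr1 // => k _; rewrite eqxx.
  move=> fg; have /existsP[k fgk] : [exists k, f k != g k].
    by apply: contraNT fg => /existsPn same; apply/eqP/ffunP => k; apply/eqP/negPn/same.
  by rewrite (bigD1 k) //= (negbTE fgk) mul0r mulr0.
exists #|{: idx n d}|, (fun m => v (enum_val m)).
rewrite -(big_enum_val (A := predT) (fun g => prod_tensor (v g))) /=.
apply/ffunP => f; rewrite sum_ffunE (bigD1 f) //= big1 => [|g gf]; rewrite v_coord.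
  by rewrite eqxx addr0.
by rewrite eq_sym (negbTE gf).
Qed.

Lemma in_tensor_power_fixed (G : 'cV[F]_d -> Prop) P chi (j0 : 'I_n) :
  (forall w, G (P *m w)) -> (forall i, apply_at i P chi = chi) ->
  in_tensor_power G chi.
Proof.
move=> G_range P_fix.
suff [M [v [Gv ->]]] : exists M (v : 'I_M -> 'I_n -> 'cV[F]_d),
    (forall m j, j \in enum 'I_n -> G (v m j)) /\ chi = \sum_(m < M) prod_tensor (v m).
  by exists M, v; split=> // m j; apply: Gv; rewrite mem_enum.
elim: (enum 'I_n) => [|i s [M [v [Gv def_chi]]]].
  by have [M [v ->]] := sum_prod_tensor_expansion chi j0; exists M, v.
exists M, (fun m j => if j == i then P *m v m j else v m j); split.
  by move=> m j; rewrite inE; case: eqP => [_ _|_ /Gv//]; apply: G_range.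
rewrite -(P_fix i) {1}def_chi raddf_sum; apply: eq_bigr => m _.
exact: apply_at_prod_tensor.
Qed.

Lemma in_sym_power0 (G : 'cV[F]_d -> Prop) : in_sym_power G (0 : tensor F n d).
Proof.
split=> [|s f]; last by rewrite !ffunE.
by exists 0%N, (fun _ _ => 0); split=> [[]|] //; rewrite big_ord0.
Qed.

End ApplyAt.

Lemma slot_invariant_horner_mx (F : comNzRingType) n d (B : 'M[F]_d.+1)
    (q : {poly F}) (psi : tensor F n d.+1) :
  slot_invariant B psi -> slot_invariant (horner_mx B q) psi.
Proof.
elim/poly_ind: q psi => [|q c IH] psi inv_psi i j; first by rewrite rmorph0 !apply_at0mx.
rewrite rmorphD rmorphM /= horner_mx_X horner_mx_C !apply_atDmx !apply_at_scalar_mx.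
congr (_ + _); rewrite -mulmxE -!apply_at_mulmx (inv_psi i j).
exact/IH/slot_invariant_apply_at.
Qed.

Lemma coprimep_partition_of_unity (K : fieldType) (I : eqType)
    (E : I -> {poly K}) (s : seq I) :
  uniq s -> {in s &, forall k l, k != l -> coprimep (E k) (E l)} ->
  exists (a : I -> {poly K}) (c : {poly K}),
    \sum_(k <- s) a k * \prod_(l <- s | l != k) E l + c * \prod_(l <- s) E l = 1.
Proof.
elim: s => [|t s IH] /=.
  by move=> _ _; exists (fun=> 0), 1; rewrite !big_nil add0r mul1r.
case/andP=> t_s uniq_s cop.
have [|a [c IHeq]] := IH uniq_s.
  by move=> k l ks ls; apply: cop; rewrite inE ?ks ?ls orbT.
have cop_t : coprimep (E t) (\prod_(l <- s) E l).
  rewrite big_seq; apply: (big_ind (coprimep (E t))) => [|p q|l ls].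
  - exact: coprimep1.
  - by rewrite coprimepMr => -> ->.
  - apply: cop; rewrite ?mem_head ?inE ?ls ?orbT //.
    by apply: contraNneq t_s => ->.
have [[u1 u2] /= bezout] := Bezout_eq1_coprimepP _ _ cop_t.
exists (fun k => if k == t then u2 else u1 * a k), (u1 * c).
rewrite !big_cons eqxx /=.
have -> : \prod_(l <- s | l != t) E l = \prod_(l <- s) E l.
  rewrite big_seq_cond [RHS]big_seq; apply: eq_bigl => l.
  by apply/andb_idr => ls; apply: contraNneq t_s => <-.
have -> : \sum_(k <- s) (if k == t then u2 else u1 * a k) *
              \prod_(l <- t :: s | l != k) E l
    = u1 * E t * \sum_(k <- s) a k * \prod_(l <- s | l != k) E l.
  rewrite mulr_sumr big_seq [RHS]big_seq; apply: eq_bigr => k ks.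
  have tk : t != k by apply: contraNneq t_s => ->.
  by rewrite big_cons tk eq_sym (negbTE tk); ring.
transitivity (u1 * E t * (\sum_(k <- s) a k * \prod_(l <- s | l != k) E l
                          + c * \prod_(l <- s) E l) + u2 * \prod_(l <- s) E l).
  by ring.
by rewrite IHeq mulr1.
Qed.

Section SpectralProjections.
Variables (K : closedFieldType) (N : nat) (B : 'M[K]_N.+1).
Variables (I : finType) (lam : I -> K).
Hypothesis lam_inj : injective lam.
Hypothesis eigenvalue_lam : forall a, eigenvalue B a -> exists k, a = lam k.

Local Notation E k := (('X - (lam k)%:P) ^+ N.+1).

Lemma prod_XsubC_dvd (r : seq K) : (forall z, z \in r -> exists k, z = lam k) ->
  \prod_(z <- r) ('X - z%:P) %| (\prod_k ('X - (lam k)%:P)) ^+ size r.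
Proof.
elim: r => [|z r IH] r_lam; first by rewrite big_nil dvd1p.
rewrite big_cons exprS; apply: dvdp_mul.
  by have [k ->] := r_lam z (mem_head z r); rewrite (bigD1 k) //= dvdp_mulr.
by apply: IH => y yr; apply: r_lam; rewrite inE yr orbT.
Qed.

Lemma horner_mx_prod_gen_eigen : horner_mx B (\prod_k E k) = 0.
Proof.
have [r char_r] := closed_field_poly_normal (char_poly B).
rewrite (monicP (char_poly_monic B)) scale1r in char_r.
have size_r : size r = N.+1.
  by have := size_char_poly B; rewrite char_r size_prod_XsubC => -[].
have : char_poly B %| \prod_k E k.
  rewrite prodrXl -[in X in _ %| X]size_r char_r; apply: prod_XsubC_dvd => z zr.
  by apply: eigenvalue_lam; rewrite eigenvalue_root_char char_r root_prod_XsubC.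
by case/dvdpP => q ->; rewrite rmorphM /= Cayley_Hamilton mulr0.
Qed.

Lemma coprimep_gen_eigen k l : k != l -> coprimep (E k) (E l).
Proof.
move=> kl; apply/coprimep_expl/coprimep_expr/coprimep_XsubC2.
by rewrite subr_eq0 (inj_eq lam_inj) eq_sym.
Qed.

(* P k := (a k * Q k)(B) with Q k = \prod_(l != k) E l, where
   sum_k a k * Q k = 1 modulo \prod_k E k, which annihilates B. *)
Lemma spectral_projections : exists P : I -> 'M[K]_N.+1,
  [/\ forall k, exists q, P k = horner_mx B q, \sum_k P k = 1,
      forall k, P k *m P k = P k &
      forall k, (B - (lam k)%:M) ^+ N.+1 *m P k = 0].
Proof.
have [|a [c partition]] :=
  @coprimep_partition_of_unity _ _ (fun k => E k) _ (index_enum_uniq I).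
  by move=> k l _ _; exact: coprimep_gen_eigen.
pose Q k := \prod_(l | l != k) E l.
have prodE k : \prod_l E l = E k * Q k by rewrite (bigD1 k).
have annihilated q : horner_mx B (q * \prod_l E l) = 0.
  by rewrite rmorphM /= horner_mx_prod_gen_eigen mulr0.
have sumP : \sum_k horner_mx B (a k * Q k) = 1.
  rewrite -rmorph_sum -[1 in RHS](rmorph1 (horner_mx B)) -partition.
  by rewrite rmorphD /= annihilated addr0.
have orthP k l : k != l -> horner_mx B (a k * Q k) * horner_mx B (a l * Q l) = 0.
  move=> kl; rewrite -rmorphM.
  set R := \prod_(j | (j != l) && (j != k)) E j.
  have -> : Q l = E k * R by rewrite /Q (bigD1 k) // eq_sym.
  have -> : a k * Q k * (a l * (E k * R)) = a k * a l * R * \prod_j E j.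
    by rewrite (prodE k); ring.
  exact: annihilated.
exists (fun k => horner_mx B (a k * Q k)); split.
- by move=> k; exists (a k * Q k).
- exact: sumP.
- move=> k; rewrite mulmxE -[X in _ = X]mulr1 -sumP mulr_sumr (bigD1 k) //=.
  by rewrite big1 ?addr0 // => l lk; apply: orthP; rewrite eq_sym.
- move=> k; have -> : (B - (lam k)%:M) ^+ N.+1 = horner_mx B (E k).
    by rewrite rmorphXn rmorphB /= horner_mx_X horner_mx_C.
  by rewrite mulmxE -rmorphM /= mulrA [_ * a k]mulrC -mulrA -prodE annihilated.
Qed.

End SpectralProjections.

Theorem theorem4 (R : realType) (n d p : nat) (hn : (2 <= n)%N)
  (B : 'M[R[i]]_d) (lam : 'I_p -> R[i]) (lam_inj : injective lam)
  (lam_spec : forall a : R[i], eigenvalue B a <-> exists k : 'I_p, a = lam k)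
  (psi : tensor R[i] n d) :
  symmetric_tensor psi ->
  symmetric_tensor (apply_at (Ordinal (ltnW hn)) B psi) ->
  exists phi : 'I_p -> tensor R[i] n d,
    (forall k : 'I_p, in_sym_power (gen_eigenspace B (lam k)) (phi k)) /\
    psi = \sum_(k < p) phi k.
Proof.
set i0 := Ordinal _; move=> sym_psi sym_Bpsi.
case: d => [|N] in B psi lam_spec sym_psi sym_Bpsi *.
  exists (fun=> 0); split=> [k|]; first exact: in_sym_power0.
  by apply/ffunP => f; case: (f i0).
have inv_B := slot_invariant_of_symmetric sym_psi sym_Bpsi.
have [P [P_poly sumP P_idem P_nil]] :=
  spectral_projections lam_inj (fun a => proj1 (lam_spec a)).
have inv_P k : slot_invariant (P k) psi.
  by have [q ->] := P_poly k; apply: slot_invariant_horner_mx.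
exists (fun k => apply_at i0 (P k) psi); split=> [k|]; last first.
  by rewrite -apply_at_sum_mx sumP -idmxE apply_at1mx.
split; last exact: symmetric_apply_at.
apply: (in_tensor_power_fixed (P := P k) i0) => [w|j].
  by exists N.+1; rewrite mulmxA P_nil mul0mx.
by rewrite (slot_invariant_apply_at i0 (inv_P k) j i0) apply_at_mulmx P_idem.
Qed.
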